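(* For every term $M$ of the distant Bang calculus $\mathtt{dBang}$, the set $\mathcal A(M)$ of Böhm approximants of $M$ is an ideal for the order $\sqsubseteq$, i.e. it is downward closed among approximants and directed: for all $A_1,A_2\in\mathcal A(M)$ there is $A_3\in\mathcal A(M)$ with $A_1\sqsubseteq A_3$ and $A_2\sqsubseteq A_3$.
   Context: \textbf{dBang.} Terms: $M,N ::= x \mid \lambda x.M \mid MN \mid M[N/x] \mid\ !M \mid \mathrm{der}\,M$, where $M[N/x]$ is an explicit substitution binding $x$ in $M$; terms up to $\alpha$-conversion, $M\{N/x\}$ capture-avoiding substitution. List contexts: $L ::= \square \mid L[N/x]$. Root rules: $L\langle\lambda x.M\rangle N \mapsto L\langle M[N/x]\rangle$; $M[L\langle !N\rangle/x]\mapsto L\langle M\{N/x\}\rangle$; $\mathrm{der}(L\langle !N\rangle)\mapsto L\langle N\rangle$. Full reduction $\to$ is their closure under arbitrary contexts. \textbf{Approximants.} Extend the syntax with a constant $\bot$. $A\sqsubseteq B$ means $A$ is obtained from $B$ by replacing some subterms by $\bot$. An approximant is a term of the extended syntax with no subterm of any of the forms $L\langle\lambda x.A\rangle B$, $L\langle\bot\rangle B$, $\mathrm{der}(L\langle !A\rangle)$, $\mathrm{der}(L\langle\bot\rangle)$, $A[L\langle !B\rangle/x]$, $A[L\langle\bot\rangle/x]$. $\mathcal A(M)=\{A\text{ approximant}\mid\exists N,\ M\to^*N,\ A\sqsubseteq N\}$. *)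

(* dBang terms with de Bruijn indices (alpha-conversion is
   built in), extended with the constant bot for approximants. *)
From Stdlib Require Import Arith List Relations.
Import ListNotations.

Inductive term : Type :=
| var  : nat -> term
| lam  : term -> term
| app  : term -> term -> term
| es   : term -> term -> term        (* es M N = M[N/x]; x is index 0 in M *)
| bang : term -> term
| der  : term -> term
| bot  : term.

Fixpoint bot_free (t : term) : Prop :=
  match t with
  | var _ => True
  | lam a | bang a | der a => bot_free a
  | app a b | es a b => bot_free a /\ bot_free b
  | bot => False
  end.

Fixpoint lift (k c : nat) (t : term) : term :=
  match t with
  | var n => if c <=? n then var (n + k) else var n
  | lam a => lam (lift k (S c) a)
  | app a b => app (lift k c a) (lift k c b)
  | es a b => es (lift k (S c) a) (lift k c b)
  | bang a => bang (lift k c a)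
  | der a => der (lift k c a)
  | bot => bot
  end.

(* subst d N t : capture-avoiding substitution of N for index d in t,
   decrementing the indices above d (the binder of d disappears). *)
Fixpoint subst (d : nat) (N : term) (t : term) : term :=
  match t with
  | var n => if n =? d then lift d 0 N
             else if d <? n then var (pred n) else var n
  | lam a => lam (subst (S d) N a)
  | app a b => app (subst d N a) (subst d N b)
  | es a b => es (subst (S d) N a) (subst d N b)
  | bang a => bang (subst d N a)
  | der a => der (subst d N a)
  | bot => bot
  end.

(* List contexts L ::= [] | L[N/x].  plug L t = L<t>; the term t is placed
   under (length L) binders. *)
Fixpoint plug (L : list term) (t : term) : term :=
  match L with
  | [] => t
  | N :: L' => es (plug L' t) N
  end.

Inductive root_step : term -> term -> Prop :=
| rs_dB : forall L M N,
    root_step (app (plug L (lam M)) N) (plug L (es M (lift (length L) 0 N)))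
| rs_sB : forall M L N,
    root_step (es M (plug L (bang N)))
              (plug L (subst 0 N (lift (length L) 1 M)))
| rs_bang : forall L N,
    root_step (der (plug L (bang N))) (plug L N).

Inductive step : term -> term -> Prop :=
| st_root : forall a b, root_step a b -> step a b
| st_lam : forall a a', step a a' -> step (lam a) (lam a')
| st_appl : forall a a' b, step a a' -> step (app a b) (app a' b)
| st_appr : forall a b b', step b b' -> step (app a b) (app a b')
| st_esl : forall a a' b, step a a' -> step (es a b) (es a' b)
| st_esr : forall a b b', step b b' -> step (es a b) (es a b')
| st_bang : forall a a', step a a' -> step (bang a) (bang a')
| st_der : forall a a', step a a' -> step (der a) (der a').

Definition steps : term -> term -> Prop := clos_refl_trans term step.

Inductive approx_le : term -> term -> Prop :=
| le_bot : forall b, approx_le bot b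
| le_var : forall n, approx_le (var n) (var n)
| le_lam : forall a b, approx_le a b -> approx_le (lam a) (lam b)
| le_app : forall a1 a2 b1 b2, approx_le a1 b1 -> approx_le a2 b2 ->
    approx_le (app a1 a2) (app b1 b2)
| le_es : forall a1 a2 b1 b2, approx_le a1 b1 -> approx_le a2 b2 ->
    approx_le (es a1 a2) (es b1 b2)
| le_bang : forall a b, approx_le a b -> approx_le (bang a) (bang b)
| le_der : forall a b, approx_le a b -> approx_le (der a) (der b).

Inductive subterm : term -> term -> Prop :=
| sub_refl : forall t, subterm t t
| sub_lam : forall s a, subterm s a -> subterm s (lam a)
| sub_appl : forall s a b, subterm s a -> subterm s (app a b)
| sub_appr : forall s a b, subterm s b -> subterm s (app a b)
| sub_esl : forall s a b, subterm s a -> subterm s (es a b)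
| sub_esr : forall s a b, subterm s b -> subterm s (es a b)
| sub_bang : forall s a, subterm s a -> subterm s (bang a)
| sub_der : forall s a, subterm s a -> subterm s (der a).

Definition forbidden (s : term) : Prop :=
  (exists L A B, s = app (plug L (lam A)) B) \/
  (exists L B, s = app (plug L bot) B) \/
  (exists L A, s = der (plug L (bang A))) \/
  (exists L, s = der (plug L bot)) \/
  (exists A L B, s = es A (plug L (bang B))) \/
  (exists A L, s = es A (plug L bot)).

Definition approximant (A : term) : Prop :=
  forall s, subterm s A -> ~ forbidden s.

Definition approximants (M : term) (A : term) : Prop :=
  approximant A /\ exists N, steps M N /\ approx_le A N.

(** Confluence of reduction is proved with Tait and Martin-Löf's parallel
    reduction: the complete development [develop t] gives the triangle property
    [par t u -> par u (develop t)], the distant rules requiring that parallel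
    reduction preserve the shapes L<λx.M> and L<!N> together with their contracta.
    An approximant below [N] stays below every reduct of [N]: the contracted redex
    sits where the approximant has ⊥, since otherwise the approximant would contain
    a forbidden shape. Two approximants below a common [N] have a join below [N],
    and it is again an approximant because a forbidden shape in the join comes
    from one of the two. Directedness follows by joining the approximants after
    closing the two reductions of [M] by confluence; downward closure is just
    transitivity of ⊑. *)

From Stdlib Require Import Arith List Relations Lia.
Import ListNotations.

(** * Lifting and substitution *)

Ltac index_cases := repeat (cbn [lift subst]; match goal with
  | |- context [?a <=? ?b] => destruct (Nat.leb_spec a b)
  | |- context [?a =? ?b] => destruct (Nat.eqb_spec a b)
  | |- context [?a <? ?b] => destruct (Nat.ltb_spec a b) end);
  try (exfalso; lia); try (f_equal; lia).

Ltac push_ih := cbn [lift subst]; try reflexivity; try (f_equal; match goal with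
  | IH : forall _, _ |- _ => rewrite IH by lia; try reflexivity; f_equal; lia
  end).

Lemma lift_zero : forall t c, lift 0 c t = t.
Proof. induction t; intros; push_ih; index_cases. Qed.

Lemma lift_lift_fuse : forall t k j c c', c' <= c <= c' + j ->
  lift k c (lift j c' t) = lift (j + k) c' t.
Proof. induction t; intros; push_ih; index_cases. Qed.

Lemma lift_lift_permute : forall t k j c c', c <= c' ->
  lift k c (lift j c' t) = lift j (c' + k) (lift k c t).
Proof. induction t; intros; push_ih; index_cases. Qed.

Lemma subst_lift_cancel : forall t N j c d, c <= d <= c + j ->
  subst d N (lift (S j) c t) = lift j c t.
Proof. induction t; intros; push_ih; index_cases. Qed.

Lemma lift_subst_below : forall t N k c d, c <= d ->
  lift k c (subst d N t) = subst (d + k) N (lift k c t).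
Proof.
  induction t; intros; push_ih; index_cases.
  subst; rewrite lift_lift_fuse by lia; reflexivity.
Qed.

Lemma lift_subst_above : forall t N k c d, d <= c ->
  lift k c (subst d N t) = subst d (lift k (c - d) N) (lift k (S c) t).
Proof.
  induction t; intros; push_ih; index_cases.
  subst; rewrite (lift_lift_permute N d k 0 (c - d)) by lia; f_equal; lia.
Qed.

Lemma subst_subst_commute : forall t P Q c d, d <= c ->
  subst c P (subst d Q t) = subst d (subst (c - d) P Q) (subst (S c) P t).
Proof.
  induction t; intros; push_ih; index_cases.
  - rewrite (lift_subst_below Q P d 0 (c - d)) by lia; f_equal; lia.
  - subst; rewrite (subst_lift_cancel P _ c 0 d) by lia; reflexivity.
Qed.

Fixpoint lift_ctx (k c : nat) (L : list term) : list term :=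
  match L with [] => [] | N :: L' => lift k c N :: lift_ctx k (S c) L' end.

Fixpoint subst_ctx (d : nat) (P : term) (L : list term) : list term :=
  match L with [] => [] | N :: L' => subst d P N :: subst_ctx (S d) P L' end.

Lemma length_lift_ctx : forall L k c, length (lift_ctx k c L) = length L.
Proof. induction L; simpl; auto. Qed.

Lemma length_subst_ctx : forall L d P, length (subst_ctx d P L) = length L.
Proof. induction L; simpl; auto. Qed.

Lemma lift_plug : forall L t k c,
  lift k c (plug L t) = plug (lift_ctx k c L) (lift k (c + length L) t).
Proof.
  induction L; intros; simpl; [now rewrite Nat.add_0_r|].
  rewrite IHL; do 3 f_equal; lia.
Qed.

Lemma subst_plug : forall L t d P,
  subst d P (plug L t) = plug (subst_ctx d P L) (subst (d + length L) P t).
Proof.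
  induction L; intros; simpl; [now rewrite Nat.add_0_r|].
  rewrite IHL; do 3 f_equal; lia.
Qed.

Lemma plug_app : forall L1 L2 t, plug (L1 ++ L2) t = plug L1 (plug L2 t).
Proof. induction L1; intros; simpl; [|rewrite IHL1]; auto. Qed.

(** * Parallel reduction and confluence *)

Definition dB_contractum (L : list term) (M N : term) : term :=
  plug L (es M (lift (length L) 0 N)).

Definition sB_contractum (M : term) (L : list term) (N : term) : term :=
  plug L (subst 0 N (lift (length L) 1 M)).

Inductive par : term -> term -> Prop :=
| par_var n : par (var n) (var n)
| par_bot : par bot bot
| par_lam a a' : par a a' -> par (lam a) (lam a')
| par_app a a' b b' : par a a' -> par b b' -> par (app a b) (app a' b')
| par_es a a' b b' : par a a' -> par b b' -> par (es a b) (es a' b')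
| par_bang a a' : par a a' -> par (bang a) (bang a')
| par_der a a' : par a a' -> par (der a) (der a')
| par_dB t s L M s' : par t (plug L (lam M)) -> par s s' ->
    par (app t s) (dB_contractum L M s')
| par_sB t t' s L N : par t t' -> par s (plug L (bang N)) ->
    par (es t s) (sB_contractum t' L N)
| par_dbang t L N : par t (plug L (bang N)) -> par (der t) (plug L N).

Lemma par_eq_r : forall a b c, par a b -> b = c -> par a c.
Proof. intros; subst; auto. Qed.

Lemma par_refl : forall t, par t t.
Proof. induction t; constructor; auto. Qed.

Lemma par_lift : forall t t', par t t' -> forall k c, par (lift k c t) (lift k c t').
Proof.
  unfold dB_contractum, sB_contractum.
  induction 1; intros; cbn [lift]; try (constructor; auto; fail).
  - destruct (c <=? n); constructor.
  - specialize (IHpar1 k c). rewrite lift_plug in IHpar1.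
    eapply par_eq_r; [apply (par_dB _ _ _ _ _ IHpar1 (IHpar2 k c))|].
    unfold dB_contractum; rewrite lift_plug, length_lift_ctx; cbn [lift].
    rewrite (lift_lift_permute s' (length L) k 0 c) by lia; reflexivity.
  - specialize (IHpar2 k c). rewrite lift_plug in IHpar2.
    eapply par_eq_r; [apply (par_sB _ _ _ _ _ (IHpar1 k (S c)) IHpar2)|].
    unfold sB_contractum.
    rewrite lift_plug, length_lift_ctx, lift_subst_above, Nat.sub_0_r by lia.
    rewrite (lift_lift_permute t' (length L) k 1 (S c)) by lia; do 3 f_equal; lia.
  - specialize (IHpar k c). rewrite lift_plug in IHpar.
    eapply par_eq_r; [apply (par_dbang _ _ _ IHpar)|]. now rewrite lift_plug.
Qed.

Lemma par_subst : forall t t', par t t' -> forall N N' d, par N N' ->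
  par (subst d N t) (subst d N' t').
Proof.
  unfold dB_contractum, sB_contractum.
  induction 1; intros P P' d HP; cbn [subst]; try (constructor; auto; fail).
  - destruct (n =? d); [now apply par_lift|]. destruct (d <? n); constructor.
  - specialize (IHpar1 P P' d HP). rewrite subst_plug in IHpar1.
    eapply par_eq_r; [apply (par_dB _ _ _ _ _ IHpar1 (IHpar2 P P' d HP))|].
    unfold dB_contractum; rewrite subst_plug, length_subst_ctx; cbn [subst].
    rewrite (lift_subst_below s' P' (length L) 0 d) by lia; reflexivity.
  - specialize (IHpar2 P P' d HP). rewrite subst_plug in IHpar2.
    eapply par_eq_r; [apply (par_sB _ _ _ _ _ (IHpar1 P P' (S d) HP) IHpar2)|].
    unfold sB_contractum.
    rewrite subst_plug, length_subst_ctx, subst_subst_commute, Nat.sub_0_r by lia.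
    rewrite (lift_subst_below t' P' (length L) 1 (S d)) by lia; do 3 f_equal; lia.
  - specialize (IHpar P P' d HP). rewrite subst_plug in IHpar.
    eapply par_eq_r; [apply (par_dbang _ _ _ IHpar)|]. now rewrite subst_plug.
Qed.

Lemma par_plug_lam : forall L M u, par (plug L (lam M)) u ->
  exists L2 M2, u = plug L2 (lam M2) /\
    forall N N2, par N N2 -> par (dB_contractum L M N) (dB_contractum L2 M2 N2).
Proof.
  unfold dB_contractum.
  induction L as [|x L IH]; intros M u H; simpl in H; inversion H; subst.
  - exists [], a'; split; auto. intros; simpl. constructor; auto. now apply par_lift.
  - destruct (IH _ _ H2) as [L3 [M3 [-> H3]]].
    exists (b' :: L3), M3; split; auto. intros Y Y2 HY; simpl. constructor; auto.
    specialize (H3 _ _ (par_lift _ _ HY 1 0)).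
    rewrite !lift_lift_fuse in H3 by lia. exact H3.
  - destruct (IH _ _ H2) as [L3 [M3 [-> H3]]].
    unfold sB_contractum; rewrite lift_plug, subst_plug, <- plug_app.
    do 2 eexists; split; [reflexivity|]. intros Y Y2 HY; simpl.
    specialize (H3 _ _ (par_lift _ _ HY 1 0)).
    rewrite !lift_lift_fuse in H3 by lia.
    eapply par_eq_r; [apply (par_sB _ _ _ _ _ H3 H4)|].
    unfold sB_contractum; rewrite lift_plug, subst_plug, <- plug_app; cbn [lift subst].
    rewrite length_app, length_subst_ctx, length_lift_ctx, lift_lift_fuse by lia.
    replace (1 + length L3 + length L0) with (S (length L3 + length L0)) by lia.
    rewrite subst_lift_cancel by lia. do 3 f_equal; lia.
Qed.

Lemma par_plug_bang : forall L N u, par (plug L (bang N)) u ->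
  exists L2 N2, u = plug L2 (bang N2) /\
    forall X X2, par X X2 -> par (sB_contractum X L N) (sB_contractum X2 L2 N2).
Proof.
  unfold sB_contractum.
  induction L as [|x L IH]; intros N u H; simpl in H; inversion H; subst.
  - exists [], a'; split; auto. intros; simpl. rewrite !lift_zero. now apply par_subst.
  - destruct (IH _ _ H2) as [L3 [N3 [-> H3]]].
    exists (b' :: L3), N3; split; auto. intros X X2 HX; simpl. constructor; auto.
    specialize (H3 _ _ (par_lift _ _ HX 1 1)).
    rewrite !lift_lift_fuse in H3 by lia. exact H3.
  - destruct (IH _ _ H2) as [L3 [N3 [-> H3]]].
    unfold sB_contractum; rewrite lift_plug, subst_plug, <- plug_app.
    do 2 eexists; split; [reflexivity|]. intros X X2 HX; simpl.
    specialize (H3 _ _ (par_lift _ _ HX 1 1)).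
    rewrite !lift_lift_fuse in H3 by lia.
    eapply par_eq_r; [apply (par_sB _ _ _ _ _ H3 H4)|].
    unfold sB_contractum; rewrite lift_plug, subst_plug, <- plug_app.
    rewrite length_app, length_subst_ctx, length_lift_ctx.
    rewrite lift_subst_above, subst_subst_commute, !Nat.sub_0_r by lia; simpl.
    rewrite lift_lift_fuse by lia.
    replace (S (length L3) + length L0) with (S (length L3 + length L0)) by lia.
    rewrite subst_lift_cancel by lia. do 3 f_equal; lia.
Qed.

Lemma plug_bang_inj : forall L1 L2 N1 N2,
  plug L1 (bang N1) = plug L2 (bang N2) -> L1 = L2 /\ N1 = N2.
Proof.
  induction L1; destruct L2; simpl; intros N1 N2 E; inversion E; auto.
  destruct (IHL1 _ _ _ H0); subst; auto.
Qed.

Lemma par_plug_bang_body : forall L N L2 N2,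
  par (plug L (bang N)) (plug L2 (bang N2)) -> par (plug L N) (plug L2 N2).
Proof.
  intros L N L2 N2 H.
  destruct (par_plug_bang _ _ _ H) as [L3 [N3 [E H3]]].
  destruct (plug_bang_inj _ _ _ _ E); subst.
  specialize (H3 _ _ (par_var 0)); unfold sB_contractum in H3; cbn [lift subst] in H3.
  simpl in H3; rewrite !lift_zero in H3; exact H3.
Qed.

Fixpoint split_lam (t : term) : option (list term * term) :=
  match t with
  | lam M => Some ([], M)
  | es a b => option_map (fun '(L, M) => (b :: L, M)) (split_lam a)
  | _ => None
  end.

Fixpoint split_bang (t : term) : option (list term * term) :=
  match t with
  | bang M => Some ([], M)
  | es a b => option_map (fun '(L, M) => (b :: L, M)) (split_bang a)
  | _ => None
  end.

Lemma split_lam_plug : forall L M, split_lam (plug L (lam M)) = Some (L, M).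
Proof. induction L; intros; simpl; [|rewrite IHL]; auto. Qed.

Lemma split_bang_plug : forall L M, split_bang (plug L (bang M)) = Some (L, M).
Proof. induction L; intros; simpl; [|rewrite IHL]; auto. Qed.

Lemma split_lam_Some : forall t L M, split_lam t = Some (L, M) -> t = plug L (lam M).
Proof.
  induction t; simpl; intros L M E; try discriminate.
  - now inversion E.
  - destruct (split_lam t1) as [[L1 M1]|]; inversion E; subst.
    simpl; now rewrite (IHt1 _ _ eq_refl).
Qed.

Lemma split_bang_Some : forall t L M, split_bang t = Some (L, M) -> t = plug L (bang M).
Proof.
  induction t; simpl; intros L M E; try discriminate.
  - destruct (split_bang t1) as [[L1 M1]|]; inversion E; subst.
    simpl; now rewrite (IHt1 _ _ eq_refl).
  - now inversion E.
Qed.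

Fixpoint develop (t : term) : term :=
  match t with
  | var n => var n
  | bot => bot
  | lam a => lam (develop a)
  | bang a => bang (develop a)
  | app a b =>
      match split_lam (develop a) with
      | Some (L, M) => dB_contractum L M (develop b)
      | None => app (develop a) (develop b)
      end
  | es a b =>
      match split_bang (develop b) with
      | Some (L, N) => sB_contractum (develop a) L N
      | None => es (develop a) (develop b)
      end
  | der a =>
      match split_bang (develop a) with
      | Some (L, N) => plug L N
      | None => der (develop a)
      end
  end.

Lemma par_develop : forall t u, par t u -> par u (develop t).
Proof.
  induction 1; simpl; try (constructor; auto; fail).
  - destruct (split_lam (develop a)) as [[L M]|] eqn:E.
    + apply split_lam_Some in E; rewrite E in IHpar1; now apply par_dB.
    + now constructor.
  - destruct (split_bang (develop b)) as [[L M]|] eqn:E.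
    + apply split_bang_Some in E; rewrite E in IHpar2; now apply par_sB.
    + now constructor.
  - destruct (split_bang (develop a)) as [[L M]|] eqn:E.
    + apply split_bang_Some in E; rewrite E in IHpar; now apply par_dbang.
    + now constructor.
  - destruct (par_plug_lam _ _ _ IHpar1) as [L2 [M2 [-> H2]]].
    rewrite split_lam_plug; auto.
  - destruct (par_plug_bang _ _ _ IHpar2) as [L2 [N2 [-> H2]]].
    rewrite split_bang_plug; auto.
  - destruct (par_plug_bang _ _ _ IHpar) as [L2 [N2 [E _]]].
    rewrite E, split_bang_plug. rewrite E in IHpar. now apply par_plug_bang_body.
Qed.

Lemma par_diamond : forall t u v, par t u -> par t v -> exists w, par u w /\ par v w.
Proof. intros t u v Hu Hv; exists (develop t); split; now apply par_develop. Qed.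

Section DiamondConfluence.

Variables (A : Type) (R : relation A).

Hypothesis R_diamond : forall t u v, R t u -> R t v -> exists w, R u w /\ R v w.

Lemma diamond_strip : forall t v, clos_refl_trans_1n A R t v ->
  forall u, R t u -> exists w, clos_refl_trans_1n A R u w /\ R v w.
Proof.
  induction 1 as [t|t t' v Htt' _ IH]; intros u Htu.
  - exists u; split; [constructor | auto].
  - destruct (R_diamond _ _ _ Htt' Htu) as [s [Ht's Hus]].
    destruct (IH _ Ht's) as [w [Hsw Hvw]].
    exists w; split; [econstructor|]; eauto.
Qed.

Lemma diamond_confluent : forall t u v, clos_refl_trans A R t u -> clos_refl_trans A R t v ->
  exists w, clos_refl_trans A R u w /\ clos_refl_trans A R v w.
Proof.
  intros t u v Hu Hv; apply clos_rt_rt1n in Hu, Hv.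
  revert v Hv; induction Hu as [t|t t' u Htt' _ IH]; intros v Hv.
  - exists v; split; [now apply clos_rt1n_rt | apply rt_refl].
  - destruct (diamond_strip _ _ Hv _ Htt') as [s [Ht's Hvs]].
    destruct (IH _ Ht's) as [w [Huw Hsw]].
    exists w; split; [exact Huw | eapply rt_trans; [apply rt_step|]; eauto].
Qed.

End DiamondConfluence.

Lemma steps_congr (f : term -> term) :
  (forall a a', step a a' -> step (f a) (f a')) ->
  forall a a', steps a a' -> steps (f a) (f a').
Proof.
  intros Hf a a' H; induction H; [apply rt_step, Hf | apply rt_refl | eapply rt_trans]; eauto.
Qed.

Lemma steps_app : forall a a' b b', steps a a' -> steps b b' -> steps (app a b) (app a' b').
Proof.
  intros a a' b b' Ha Hb; eapply rt_trans.
  - exact (steps_congr (fun x => app x b) (fun x x' => st_appl x x' b) _ _ Ha).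
  - exact (steps_congr (app a') (st_appr a') _ _ Hb).
Qed.

Lemma steps_es : forall a a' b b', steps a a' -> steps b b' -> steps (es a b) (es a' b').
Proof.
  intros a a' b b' Ha Hb; eapply rt_trans.
  - exact (steps_congr (fun x => es x b) (fun x x' => st_esl x x' b) _ _ Ha).
  - exact (steps_congr (es a') (st_esr a') _ _ Hb).
Qed.

Lemma par_steps : forall t u, par t u -> steps t u.
Proof.
  induction 1.
  1, 2: apply rt_refl.
  - exact (steps_congr lam st_lam _ _ IHpar).
  - now apply steps_app.
  - now apply steps_es.
  - exact (steps_congr bang st_bang _ _ IHpar).
  - exact (steps_congr der st_der _ _ IHpar).
  - apply rt_trans with (app (plug L (lam M)) s'); [now apply steps_app|].
    apply rt_step, st_root, rs_dB.
  - apply rt_trans with (es t' (plug L (bang N))); [now apply steps_es|].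
    apply rt_step, st_root, rs_sB.
  - apply rt_trans with (der (plug L (bang N))); [exact (steps_congr der st_der _ _ IHpar)|].
    apply rt_step, st_root, rs_bang.
Qed.

Lemma step_par : forall t u, step t u -> par t u.
Proof.
  induction 1; try (constructor; auto using par_refl; fail).
  destruct H; [apply par_dB | apply par_sB | apply par_dbang]; apply par_refl.
Qed.

Lemma steps_iff_par_star : forall t u, steps t u <-> clos_refl_trans term par t u.
Proof.
  split; induction 1; try (apply rt_refl); try (eapply rt_trans; eassumption).
  - now apply rt_step, step_par.
  - now apply par_steps.
Qed.

Lemma steps_confluent : forall t u v, steps t u -> steps t v ->
  exists w, steps u w /\ steps v w.
Proof.
  intros t u v Hu Hv; rewrite steps_iff_par_star in Hu, Hv.
  destruct (diamond_confluent _ _ par_diamond _ _ _ Hu Hv) as [w [Huw Hvw]].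
  exists w; split; now apply steps_iff_par_star.
Qed.

(** * Approximants *)

Definition ctx_headed (head : term -> Prop) (t : term) : Prop :=
  exists L h, head h /\ t = plug L h.

Definition lam_or_bot (h : term) : Prop := h = bot \/ exists M, h = lam M.

Definition bang_or_bot (h : term) : Prop := h = bot \/ exists M, h = bang M.

Ltac destruct_forbidden :=
  intros [[L [A [B H]]]|[[L [B H]]|[[L [A H]]|[[L H]|[[A [L [B H]]]|[A [L H]]]]]]].

Ltac forbidden_cases :=
  unfold ctx_headed, lam_or_bot, bang_or_bot; split;
  [ destruct_forbidden; inversion H; subst; eauto 6
  | unfold forbidden; intros [L [h [[->|[M ->]] ->]]]; eauto 10 ].

Lemma forbidden_app : forall a b, forbidden (app a b) <-> ctx_headed lam_or_bot a.
Proof. intros; forbidden_cases. Qed.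

Lemma forbidden_es : forall a b, forbidden (es a b) <-> ctx_headed bang_or_bot b.
Proof. intros; forbidden_cases. Qed.

Lemma forbidden_der : forall a, forbidden (der a) <-> ctx_headed bang_or_bot a.
Proof. intros; forbidden_cases. Qed.

Lemma forbidden_lam : forall a, ~ forbidden (lam a).
Proof. intros a; destruct_forbidden; discriminate. Qed.

Lemma forbidden_bang : forall a, ~ forbidden (bang a).
Proof. intros a; destruct_forbidden; discriminate. Qed.

Lemma subterm_trans : forall r s t, subterm r s -> subterm s t -> subterm r t.
Proof. intros r s t Hrs Hst; induction Hst; eauto using subterm. Qed.

Lemma approximant_subterm : forall s t, approximant t -> subterm s t -> approximant s.
Proof. intros s t Ht Hst r Hrs; apply Ht; eapply subterm_trans; eassumption. Qed.

Lemma approximant_lam : forall a, approximant (lam a) <-> approximant a.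
Proof.
  split; [intros H; eapply approximant_subterm; eauto using subterm|].
  intros Ha s Hs; inversion Hs; subst; [apply forbidden_lam | now apply Ha].
Qed.

Lemma approximant_bang : forall a, approximant (bang a) <-> approximant a.
Proof.
  split; [intros H; eapply approximant_subterm; eauto using subterm|].
  intros Ha s Hs; inversion Hs; subst; [apply forbidden_bang | now apply Ha].
Qed.

Lemma approximant_app : forall a b, approximant (app a b) <->
  approximant a /\ approximant b /\ ~ ctx_headed lam_or_bot a.
Proof.
  split.
  - intros H; repeat split; try (eapply approximant_subterm; eauto using subterm).
    rewrite <- forbidden_app; apply H, sub_refl.
  - intros (Ha & Hb & Hn) s Hs; inversion Hs; subst; auto.
    now rewrite forbidden_app.
Qed.

Lemma approximant_es : forall a b, approximant (es a b) <->
  approximant a /\ approximant b /\ ~ ctx_headed bang_or_bot b.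
Proof.
  split.
  - intros H; repeat split; try (eapply approximant_subterm; eauto using subterm).
    rewrite <- (forbidden_es a); apply H, sub_refl.
  - intros (Ha & Hb & Hn) s Hs; inversion Hs; subst; auto.
    now rewrite forbidden_es.
Qed.

Lemma approximant_der : forall a, approximant (der a) <->
  approximant a /\ ~ ctx_headed bang_or_bot a.
Proof.
  split.
  - intros H; split; [eapply approximant_subterm; eauto using subterm|].
    rewrite <- forbidden_der; apply H, sub_refl.
  - intros (Ha & Hn) s Hs; inversion Hs; subst; auto.
    now rewrite forbidden_der.
Qed.

Lemma approx_le_refl : forall t, approx_le t t.
Proof. induction t; constructor; auto. Qed.

Lemma approx_le_trans : forall a b c, approx_le a b -> approx_le b c -> approx_le a c.
Proof.
  intros a b c H; revert c; induction H; intros c Hc; inversion Hc; subst; constructor; auto.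
Qed.

(* On incompatible arguments (no common upper bound) the value is junk. *)
Fixpoint join (a b : term) : term :=
  match a, b with
  | bot, _ => b
  | _, bot => a
  | lam a1, lam b1 => lam (join a1 b1)
  | app a1 a2, app b1 b2 => app (join a1 b1) (join a2 b2)
  | es a1 a2, es b1 b2 => es (join a1 b1) (join a2 b2)
  | bang a1, bang b1 => bang (join a1 b1)
  | der a1, der b1 => der (join a1 b1)
  | _, _ => a
  end.

Section CtxHeaded.

Variable head : term -> Prop.

Lemma ctx_headed_le : (forall h h', approx_le h' h -> head h -> head h') ->
  forall A B, approx_le A B -> ctx_headed head B -> ctx_headed head A.
Proof.
  intros Hdown A B HAB [L [h [Hh ->]]].
  assert (Hbot : head bot) by exact (Hdown _ _ (le_bot h) Hh).
  revert A HAB; induction L as [|N L IH]; simpl; intros A HAB.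
  - exists [], A; eauto.
  - inversion HAB as [| | | |a1 a2 b1 b2 Ha1 Ha2| |]; subst; [now exists [], bot|].
    destruct (IH _ Ha1) as [L' [h' [Hh' ->]]]. now exists (a2 :: L'), h'.
Qed.

Lemma ctx_headed_join : (forall a b, head (join a b) -> head a \/ head b) ->
  forall a b, ctx_headed head (join a b) -> ctx_headed head a \/ ctx_headed head b.
Proof.
  intros Hjoin a b [L [h [Hh E]]]; revert a b E; induction L as [|N L IH]; simpl; intros a b E.
  - subst; destruct (Hjoin _ _ Hh); [left; exists [], a | right; exists [], b]; auto.
  - destruct a, b; simpl in E;
      try solve [discriminate | left; exists (N :: L), h; auto | right; exists (N :: L), h; auto].
    injection E as E1 E2.
    destruct (IH _ _ E1) as [[L' [h' [Hh' ->]]]|[L' [h' [Hh' ->]]]];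
      [left | right]; eexists (_ :: L'), h'; simpl; auto.
Qed.

End CtxHeaded.

Lemma lam_or_bot_le : forall h h', approx_le h' h -> lam_or_bot h -> lam_or_bot h'.
Proof. intros h h' H [->|[M ->]]; inversion H; unfold lam_or_bot; eauto. Qed.

Lemma bang_or_bot_le : forall h h', approx_le h' h -> bang_or_bot h -> bang_or_bot h'.
Proof. intros h h' H [->|[M ->]]; inversion H; unfold bang_or_bot; eauto. Qed.

Lemma approx_le_plug_lam : forall A L M,
  approx_le A (plug L (lam M)) -> ctx_headed lam_or_bot A.
Proof.
  intros A L M H; apply (ctx_headed_le _ lam_or_bot_le _ _ H).
  exists L, (lam M); split; [right; eauto | reflexivity].
Qed.

Lemma approx_le_plug_bang : forall A L M,
  approx_le A (plug L (bang M)) -> ctx_headed bang_or_bot A.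
Proof.
  intros A L M H; apply (ctx_headed_le _ bang_or_bot_le _ _ H).
  exists L, (bang M); split; [right; eauto | reflexivity].
Qed.

Lemma approximant_below_redex : forall A N N', root_step N N' -> approximant A ->
  approx_le A N -> A = bot.
Proof.
  intros A N N' [L M P|M L P|L P] HA HAN;
    inversion HAN as [| | |a1 a2 b1 b2 H1 H2|a1 a2 b1 b2 H1 H2| |a b H]; subst; auto; exfalso.
  - apply approximant_app in HA as (_ & _ & Hn); eauto using approx_le_plug_lam.
  - apply approximant_es in HA as (_ & _ & Hn); eauto using approx_le_plug_bang.
  - apply approximant_der in HA as (_ & Hn); eauto using approx_le_plug_bang.
Qed.

Lemma approx_le_step : forall N N', step N N' -> forall A, approximant A ->
  approx_le A N -> approx_le A N'.
Proof.
  induction 1; intros A HA HAN.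
  1: rewrite (approximant_below_redex _ _ _ H HA HAN); apply le_bot.
  all: inversion HAN; subst; [apply le_bot|constructor; auto];
    apply IHstep; auto; eapply approximant_subterm; eauto using subterm.
Qed.

Lemma approx_le_steps : forall N N', steps N N' -> forall A, approximant A ->
  approx_le A N -> approx_le A N'.
Proof. induction 1; eauto using approx_le_step. Qed.

Lemma lam_or_bot_join : forall a b, lam_or_bot (join a b) -> lam_or_bot a \/ lam_or_bot b.
Proof.
  intros a b [E|[M E]]; destruct a, b; simpl in E; try discriminate; unfold lam_or_bot; eauto.
Qed.

Lemma bang_or_bot_join : forall a b, bang_or_bot (join a b) -> bang_or_bot a \/ bang_or_bot b.
Proof.
  intros a b [E|[M E]]; destruct a, b; simpl in E; try discriminate; unfold bang_or_bot; eauto.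
Qed.

Lemma join_lub : forall a n, approx_le a n -> forall b, approx_le b n ->
  approx_le a (join a b) /\ approx_le b (join a b) /\ approx_le (join a b) n.
Proof.
  induction 1; intros c Hc; inversion Hc; subst; simpl;
    repeat split; try constructor; try apply approx_le_refl; auto;
    repeat match goal with
    | IH : forall b, approx_le b ?n -> _, H : approx_le ?x ?n |- _ =>
        destruct (IH _ H) as [? [? ?]]; clear IH
    end; auto.
Qed.

Lemma join_approximant : forall a b, approximant a -> approximant b -> approximant (join a b).
Proof.
  induction a; destruct b; simpl; intros Ha Hb; auto.
  - rewrite approximant_lam in *; auto.
  - rewrite approximant_app in *.
    destruct Ha as (Ha1 & Ha2 & Hna), Hb as (Hb1 & Hb2 & Hnb).
    repeat split; auto.
    intros H; destruct (ctx_headed_join _ lam_or_bot_join _ _ H); auto.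
  - rewrite approximant_es in *.
    destruct Ha as (Ha1 & Ha2 & Hna), Hb as (Hb1 & Hb2 & Hnb).
    repeat split; auto.
    intros H; destruct (ctx_headed_join _ bang_or_bot_join _ _ H); auto.
  - rewrite approximant_bang in *; auto.
  - rewrite approximant_der in *.
    destruct Ha as (Ha1 & Hna), Hb as (Hb1 & Hnb).
    split; auto.
    intros H; destruct (ctx_headed_join _ bang_or_bot_join _ _ H); auto.
Qed.

Theorem mainTheorem2 (M : term) (HM : bot_free M) :
  (forall A B, approximant A -> approx_le A B -> approximants M B ->
     approximants M A) /\
  (forall A1 A2, approximants M A1 -> approximants M A2 ->
     exists A3, approximants M A3 /\ approx_le A1 A3 /\ approx_le A2 A3).
Proof.
  split.
  - intros A B HA HAB [_ [N [HMN HBN]]].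
    split; [exact HA|]. exists N; split; [exact HMN | eapply approx_le_trans; eassumption].
  - intros A1 A2 [HA1 [N1 [HMN1 HAN1]]] [HA2 [N2 [HMN2 HAN2]]].
    destruct (steps_confluent _ _ _ HMN1 HMN2) as [N [HN1 HN2]].
    destruct (join_lub A1 N) with (b := A2) as (H1 & H2 & HN);
      [exact (approx_le_steps _ _ HN1 _ HA1 HAN1) | exact (approx_le_steps _ _ HN2 _ HA2 HAN2)|].
    exists (join A1 A2); repeat split; auto.
    + now apply join_approximant.
    + exists N; split; [eapply rt_trans|]; eassumption.
Qed.
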